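(* Let $n,d\in\mathbb{N}$ with $\frac1n+\frac1d<1$ and $n\neq d$, let $m=n+d$, and let $\lambda\in W$ with $\psi=\operatorname{Arg}(\lambda)$. Let $\varepsilon>0$ be chosen as described in the context, and let $V_\lambda'$ be the region bounded by the two rays $\operatorname{Arg} z=\frac{\psi\pm\pi}{m}$ and the two curves $\widehat\gamma_n,\widehat\gamma_d$. Let \[\widehat U_\lambda=\left\{z\in\mathbb{C}: |z|<2+\varepsilon,\ \theta_2<\operatorname{Arg}(z)<\theta_1\right\},\] where \[\theta_1=\min\left\{\tfrac{n\psi+d\pi}{m},\ \tfrac{n\psi-d\pi}{m}+\pi\right\},\qquad \theta_2=\max\left\{\tfrac{n\psi-d\pi}{m},\ \tfrac{n\psi+d\pi}{m}-\pi\right\}.\] Then $V_\lambda'\subset \widehat U_\lambda$.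
   Context: $F_\lambda(z)=z^n+\lambda/z^d$ on the Riemann sphere, with $\lambda\in\mathbb{C}$. $W$ is the closed polar rectangle of $\lambda$-values in the right half-plane bounded by arcs of the circles $|\lambda|=\frac nd\left(\frac{d}{2m}\right)^{\frac{md}{nd-m}}$ and $|\lambda|=\frac nd\left(\frac{2d}{m}\right)^{\frac mn}$ and by portions of the rays $\operatorname{Arg}(\lambda)=\pm\frac{\pi}{n-1}$. $B_\lambda$ is the immediate attracting basin of the superattracting fixed point $\infty$, and the trap door $T_\lambda$ is the component of $F_\lambda^{-1}(B_\lambda)$ containing $0$. $\Gamma$ is the circle $|z|=2$ and $\mu$ is the circle $|z|=\frac12\left(\frac{d|\lambda|}{n}\right)^{1/d}$. $\gamma_d$ is the preimage of $\Gamma$ under $F_\lambda$ lying in $T_\lambda$ (outside $\mu$), and $\gamma_n$ is the preimage of $\Gamma$ lying in $B_\lambda$ (inside $\Gamma$). For compact sets $\alpha,\beta$, $d(\alpha,\beta)$ is the minimal Euclidean distance between points of $\alpha$ and $\beta$. Fix $\delta_1,\delta_2>0$ with $d(\Gamma,\gamma_n)>\delta_1$ and $d(\mu,\gamma_d)>\delta_2$. For $\varepsilon>0$, $\widehat\Gamma$ is the circle $|z|=2+\varepsilon$, and $\widehat\gamma_n\subset B_\lambda$, $\widehat\gamma_d\subset T_\lambda$ are the preimages of $\widehat\Gamma$ under $F_\lambda$ in $B_\lambda$ and $T_\lambda$ respectively; $\varepsilon$ is chosen small enough that $d(\widehat\gamma_n,\gamma_n)<\frac12\min(\delta_1,\delta_2)$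 and $d(\widehat\gamma_d,\gamma_d)<\frac12\min(\delta_1,\delta_2)$. *)

From Stdlib Require Import Reals.
From Coquelicot Require Import Coquelicot.
Open Scope R_scope.

(* The point at infinity of the Riemann sphere is [None]; [Some z] is z in C. *)
Definition sphere := option C.

Definition F (n d : nat) (lam : C) (z : sphere) : sphere :=
  match z with
  | None => None
  | Some z0 =>
      if Req_EM_T (Cmod z0) 0 then None
      else Some (Cplus (Cpow z0 n) (Cdiv lam (Cpow z0 d)))
  end.

Fixpoint Fiter (n d : nat) (lam : C) (k : nat) (z : sphere) : sphere :=
  match k with
  | O => z
  | S k' => F n d lam (Fiter n d lam k' z)
  end.

Definition tends_to_infinity (u : nat -> sphere) : Prop :=
  forall M : R, exists N : nat, forall k, (N <= k)%nat ->
    match u k with None => True | Some w => M < Cmod w end.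

Definition basin_inf (n d : nat) (lam : C) (z : C) : Prop :=
  tends_to_infinity (fun k => Fiter n d lam k (Some z)).

Definition connected_set (S : C -> Prop) : Prop :=
  forall U V : C -> Prop, open U -> open V ->
    (forall z, S z -> U z \/ V z) ->
    (forall z, S z -> U z -> V z -> False) ->
    (exists z, S z /\ U z) -> (exists z, S z /\ V z) -> False.

Definition unbounded (S : C -> Prop) : Prop :=
  forall M : R, exists z, S z /\ M < Cmod z.

(* Finite part of the immediate basin B_lambda of oo: the component of the
   basin containing oo.  Removing oo from it leaves the (unique) unbounded
   connected component of (basin \cap C). *)
Definition B_fin (n d : nat) (lam : C) (z : C) : Prop :=
  exists S : C -> Prop, connected_set S /\ unbounded S /\ S z /\
    forall w, S w -> basin_inf n d lam w.

(* Finite part of F^{-1}(B_lambda): 0 (mapped to oo) and the z <> 0 with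
   F(z) in B_lambda \cap C. *)
Definition preB_fin (n d : nat) (lam : C) (z : C) : Prop :=
  match F n d lam (Some z) with
  | None => True
  | Some w => B_fin n d lam w
  end.

(* Trap door T_lambda: component of F^{-1}(B_lambda) containing 0 (its
   finite part). *)
Definition T_fin (n d : nat) (lam : C) (z : C) : Prop :=
  exists S : C -> Prop, connected_set S /\ S 0%C /\ S z /\
    forall w, S w -> preB_fin n d lam w.

Definition preimage_circle (n d : nat) (lam : C) (r : R) (A : C -> Prop)
    (z : C) : Prop :=
  A z /\ exists w, F n d lam (Some z) = Some w /\ Cmod w = r.

Definition circle (r : R) (z : C) : Prop := Cmod z = r.

(* Minimal distance between (compact) sets: d(A,B) > delta and d(A,B) < c,
   written out as properties of the infimum of |a - b|. *)
Definition setdist_gt (A B : C -> Prop) (delta : R) : Prop :=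
  exists delta', delta < delta' /\
    forall a b, A a -> B b -> delta' <= Cmod (Cminus a b).
Definition setdist_lt (A B : C -> Prop) (c : R) : Prop :=
  exists a b, A a /\ B b /\ Cmod (Cminus a b) < c.

Definition IsArg (z : C) (theta : R) : Prop :=
  z <> 0%C /\ - PI < theta <= PI /\
  z = Cmult (RtoC (Cmod z)) (cos theta, sin theta).

Definition W (n d : nat) (lam : C) : Prop :=
  let m := (n + d)%nat in
  let r1 := INR n / INR d *
            Rpower (INR d / (2 * INR m)) (INR m * INR d / (INR n * INR d - INR m)) in
  let r2 := INR n / INR d * Rpower (2 * INR d / INR m) (INR m / INR n) in
  r1 <= Cmod lam <= r2 /\
  exists psi, IsArg lam psi /\ - (PI / (INR n - 1)) <= psi <= PI / (INR n - 1).

(* Interior of a closed curve gamma (component of C \ gamma containing 0)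
   and exterior (unbounded part of C \ gamma). *)
Definition inside_curve (gamma : C -> Prop) (z : C) : Prop :=
  exists S : C -> Prop, connected_set S /\ S 0%C /\ S z /\
    forall w, S w -> ~ gamma w.
Definition outside_curve (gamma : C -> Prop) (z : C) : Prop :=
  exists S : C -> Prop, connected_set S /\ unbounded S /\ S z /\
    forall w, S w -> ~ gamma w.

Definition Vprime (m : nat) (psi : R) (gn gd : C -> Prop) (z : C) : Prop :=
  (exists t, IsArg z t /\ (psi - PI) / INR m < t < (psi + PI) / INR m) /\
  ~ gn z /\ ~ gd z /\ ~ outside_curve gn z /\ ~ inside_curve gd z.

Definition Uhat (eps theta1 theta2 : R) (z : C) : Prop :=
  Cmod z < 2 + eps /\ exists t, IsArg z t /\ theta2 < t < theta1.

From Stdlib Require Import Reals.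
From Coquelicot Require Import Coquelicot.
Open Scope R_scope.
From Stdlib Require Import Lra Lia Classical.

(* For |lambda| <= 2^(d+1), which holds on W, |F(w)| > |w| whenever |w| > 2.
   So if |z| >= 2 + eps, the outward ray from z is a connected unbounded set on
   which |F| stays above 2 + eps: it misses gamma_n^ and z lies outside that
   curve, hence not in V'.  The angular bounds are arithmetic: on W,
   |(n-1) psi| <= pi <= (d-1) pi, which puts the sector
   (psi - pi)/m < Arg z < (psi + pi)/m inside (theta2, theta1). *)

Lemma segment_crossing (P Q : R -> Prop) (a b : R) :
  open P -> open Q -> a <= b -> (forall s, a <= s <= b -> P s \/ Q s) ->
  P a -> Q b -> exists s, a <= s <= b /\ P s /\ Q s.
Proof.
  intros oP oQ hab cover Pa Qb.
  (* c := sup of the s such that P holds on [a, s]; whichever of P, Q holds at c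
     also holds near c, and P holds just left of c *)
  set (E := fun s => a <= s <= b /\ forall t, a <= t <= s -> P t).
  assert (Ea : E a).
  { split; [lra|]. intros t ht. replace t with a by lra. exact Pa. }
  destruct (completeness E) as [c [ub lub]].
  - exists b. intros x [hx _]. lra.
  - exists a. exact Ea.
  - assert (hac : a <= c) by (apply ub, Ea).
    assert (hcb : c <= b) by (apply lub; intros x [hx _]; lra).
    assert (below : forall t, a <= t < c -> P t).
    { intros t ht. apply NNPP. intro nPt.
      enough (c <= t) by lra.
      apply lub. intros x [hx Px].
      destruct (Rle_lt_dec x t) as [h | h]; [exact h |].
      exfalso. apply nPt, Px. lra. }
    destruct (cover c (conj hac hcb)) as [Pc | Qc].
    + destruct (Req_dec c b) as [-> | c_neq_b].
      { exists b. split; [lra | auto]. }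
      destruct (oP c Pc) as [e he]. pose proof (cond_pos e).
      set (c' := Rmin b (c + e / 2)).
      assert (c < c' <= b) by (unfold c', Rmin; destruct Rle_dec; lra).
      assert (c' <= c + e / 2) by apply Rmin_r.
      enough (c' <= c) by lra.
      apply ub. split; [lra |]. intros t ht.
      destruct (Rlt_le_dec t c) as [h | h]; [apply below; lra |].
      apply he. change (Rabs (t - c) < e). rewrite Rabs_right; lra.
    + destruct (Req_dec c a) as [-> | c_neq_a].
      { exists a. split; [lra | auto]. }
      destruct (oQ c Qc) as [e he]. pose proof (cond_pos e).
      set (t := Rmax a (c - e / 2)).
      assert (a <= t < c) by (unfold t, Rmax; destruct Rle_dec; lra).
      assert (c - e / 2 <= t) by apply Rmax_r.
      exists t. split; [lra | split; [apply below; lra |]].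
      apply he. change (Rabs (t - c) < e). rewrite Rabs_left; lra.
Qed.

Lemma halfline_crossing (P Q : R -> Prop) (a x y : R) :
  open P -> open Q -> (forall s, a <= s -> P s \/ Q s) ->
  a <= x -> a <= y -> P x -> Q y -> exists s, a <= s /\ P s /\ Q s.
Proof.
  intros oP oQ cover hx hy Px Qy.
  destruct (Rle_lt_dec x y) as [hxy | hyx].
  - destruct (segment_crossing P Q x y) as [s [hs PQs]]; auto.
    + intros s hs. apply cover. lra.
    + exists s. split; [lra | exact PQs].
  - destruct (segment_crossing Q P y x) as [s [hs [Qs Ps]]]; auto.
    + lra.
    + intros s hs. destruct (cover s); [lra | right | left]; assumption.
    + exists s. split; [lra | auto].
Qed.

Lemma open_scale_preimage (U : C -> Prop) (u : C) :
  open U -> open (fun s : R => U (RtoC s * u)%C).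
Proof.
  intros oU s Us. destruct (oU _ Us) as [e he].
  assert (hu : 0 < Cmod u + 1) by (pose proof (Cmod_ge_0 u); lra).
  assert (he' : 0 < e / (Cmod u + 1)) by (apply Rdiv_lt_0_compat; [apply cond_pos | lra]).
  exists (mkposreal _ he'). intros t ht. change (Rabs (t - s) < e / (Cmod u + 1)) in ht.
  apply he, (norm_compat1 (V := C_NormedModule)).
  change (Cmod (RtoC t * u - RtoC s * u)%C < e).
  replace (RtoC t * u - RtoC s * u)%C with (RtoC (t - s) * u)%C
    by (rewrite RtoC_minus; ring).
  rewrite Cmod_mult, Cmod_R.
  apply Rle_lt_trans with (Rabs (t - s) * (Cmod u + 1));
    [apply Rmult_le_compat_l; [apply Rabs_pos | lra] |].
  apply Rmult_lt_reg_r with (/ (Cmod u + 1)); [apply Rinv_0_lt_compat; lra |].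
  field_simplify; [exact ht | lra | lra].
Qed.

Lemma ray_connected (a : R) (u : C) :
  connected_set (fun w => exists s, a <= s /\ w = (RtoC s * u)%C).
Proof.
  intros U V oU oV cover disj [_ [[x [hx ->]] Ux]] [_ [[y [hy ->]] Vy]].
  destruct (halfline_crossing (fun s => U (RtoC s * u)%C) (fun s => V (RtoC s * u)%C) a x y)
    as [s [hs [Us Vs]]]; try apply open_scale_preimage; auto.
  - intros s hs. apply cover. exists s. auto.
  - exact (disj _ (ex_intro _ s (conj hs eq_refl)) Us Vs).
Qed.

Lemma Cmod_sub_le_add (x y : C) : Cmod x - Cmod y <= Cmod (x + y).
Proof.
  pose proof (Cmod_triangle (x + y) (- y)) as h.
  replace (x + y + - y)%C with x in h by ring.
  rewrite Cmod_opp in h. lra.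
Qed.

Lemma Cmod_F_gt (n d : nat) (lam w : C) :
  (2 <= n)%nat -> Cmod lam <= 2 ^ (d + 1) -> 2 < Cmod w ->
  Cmod w < Cmod (w ^ n + lam / w ^ d)%C.
Proof.
  intros hn hlam hw.
  assert (hwd : 0 < Cmod w ^ d) by (apply pow_lt; lra).
  assert (hpow : Cmod w ^ 2 <= Cmod w ^ n) by (apply Rle_pow; [lra | lia]).
  assert (hquot : Cmod lam / Cmod w ^ d <= 2).
  { apply Rle_div_l; [exact hwd |].
    rewrite pow_add in hlam.
    enough (2 ^ d <= Cmod w ^ d) by lra.
    apply pow_incr. lra. }
  pose proof (Cmod_sub_le_add (w ^ n) (lam / w ^ d)) as h.
  rewrite Cmod_div, !Cmod_pow in h
    by (apply Cpow_nz; intro w0; rewrite w0, Cmod_0 in hw; lra).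
  simpl in hpow. nra.
Qed.

Lemma outside_preimage_circle (n d : nat) (lam : C) (r : R) (A : C -> Prop) (z : C) :
  (2 <= n)%nat -> Cmod lam <= 2 ^ (d + 1) -> 2 < r -> r <= Cmod z ->
  outside_curve (preimage_circle n d lam r A) z.
Proof.
  intros hn hlam hr hz.
  assert (hz0 : 0 < Cmod z) by lra.
  assert (mod_ray : forall s, 0 <= s -> Cmod (RtoC s * z)%C = s * Cmod z)
    by (intros s hs; rewrite Cmod_mult, Cmod_R, Rabs_pos_eq by exact hs; reflexivity).
  exists (fun w => exists s, 1 <= s /\ w = (RtoC s * z)%C).
  split; [apply ray_connected |].
  split; [| split].
  - intro M. exists (RtoC (1 + Rabs M / Cmod z) * z)%C. split.
    + exists (1 + Rabs M / Cmod z). split; [| reflexivity].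
      pose proof (Rdiv_le_0_compat _ _ (Rabs_pos M) hz0). lra.
    + rewrite mod_ray by (pose proof (Rdiv_le_0_compat _ _ (Rabs_pos M) hz0); lra).
      replace ((1 + Rabs M / Cmod z) * Cmod z) with (Cmod z + Rabs M) by (field; lra).
      pose proof (Rle_abs M). lra.
  - exists 1. split; [lra | ring].
  - intros w [s [hs ->]] [_ [w' [hF hw']]].
    assert (hsz : r <= s * Cmod z) by nra.
    rewrite <- mod_ray in hsz by lra.
    unfold F in hF. destruct Req_EM_T as [_ | _]; [discriminate |].
    injection hF as <-.
    pose proof (Cmod_F_gt n d lam (RtoC s * z)%C hn hlam ltac:(lra)). lra.
Qed.

Lemma W_radius_le (n d : nat) : (0 < n)%nat -> (0 < d)%nat ->
  INR n / INR d * Rpower (2 * INR d / INR (n + d)) (INR (n + d) / INR n)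
    <= 2 ^ (d + 1).
Proof.
  intros hn hd.
  assert (hN : 1 <= INR n) by (apply (le_INR 1); lia).
  assert (hD : 1 <= INR d) by (apply (le_INR 1); lia).
  rewrite plus_INR.
  set (x := 2 * INR d / (INR n + INR d)).
  set (e := (INR n + INR d) / INR n).
  assert (hx : 0 < x) by (apply Rdiv_lt_0_compat; lra).
  assert (he : 1 <= e) by (apply Rle_div_r; lra).
  assert (h2 : 2 <= 2 ^ (d + 1)).
  { replace 2 with (2 ^ 1) at 1 by ring. apply Rle_pow; [lra | lia]. }
  destruct (Rle_lt_dec x 1) as [hx1 | hx1].
  - (* x^e <= x since e >= 1, and n/d * x = 2n/(n+d) <= 2 *)
    assert (Rpower x (e - 1) <= 1).
    { replace 1 with (Rpower 1 (e - 1)) at 2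
        by (unfold Rpower; rewrite ln_1, Rmult_0_r; apply exp_0).
      apply Rle_Rpower_l; lra. }
    assert (Rpower x e <= x).
    { replace e with (1 + (e - 1)) by ring.
      rewrite Rpower_plus, Rpower_1 by exact hx. nra. }
    assert (INR n / INR d * x <= 2).
    { replace (INR n / INR d * x) with (2 * INR n / (INR n + INR d)) by (unfold x; field; lra).
      apply Rle_div_l; lra. }
    assert (0 <= INR n / INR d) by (apply Rlt_le, Rdiv_lt_0_compat; lra).
    nra.
  - (* x > 1 forces d > n: then n/d <= 1, x < 2 and e = 1 + d/n <= d + 1 *)
    assert (INR n <= INR d).
    { unfold x in hx1. apply Rlt_div_r in hx1; lra. }
    assert (Rpower x e <= Rpower 2 e)
      by (apply Rle_Rpower_l; [lra | split; [lra | apply Rle_div_l; lra]]).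
    assert (Rpower 2 e <= 2 ^ (d + 1)).
    { rewrite <- Rpower_pow by lra. apply Rle_Rpower; [lra |].
      rewrite plus_INR. simpl. apply Rle_div_l; nra. }
    assert (INR n / INR d <= 1) by (apply Rle_div_l; lra).
    assert (0 <= INR n / INR d) by (apply Rlt_le, Rdiv_lt_0_compat; lra).
    assert (0 <= Rpower x e) by (apply Rlt_le, exp_pos).
    nra.
Qed.

Lemma W_Cmod_le (n d : nat) (lam : C) : (0 < n)%nat -> (0 < d)%nat ->
  W n d lam -> Cmod lam <= 2 ^ (d + 1).
Proof.
  intros hn hd [[_ hr2] _].
  exact (Rle_trans _ _ _ hr2 (W_radius_le n d hn hd)).
Qed.

Lemma cos_sin_inj (a b : R) : - PI < a <= PI -> - PI < b <= PI ->
  cos a = cos b -> sin a = sin b -> a = b.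
Proof.
  intros ha hb hcos hsin.
  assert (upper : forall x, - PI < x <= PI -> 0 <= sin x -> 0 <= x).
  { intros x hx hs. destruct (Rlt_le_dec x 0) as [hneg | ]; [| assumption].
    pose proof (sin_lt_0_var x (proj1 hx) hneg). lra. }
  destruct (Rle_lt_dec 0 (sin a)) as [hs | hs].
  - apply cos_inj; try split; try lra; apply upper; lra.
  - assert (a < 0) by (destruct (Rlt_le_dec a 0); [| pose proof (sin_ge_0 a)]; lra).
    assert (b < 0) by (destruct (Rlt_le_dec b 0); [| pose proof (sin_ge_0 b)]; lra).
    enough (- a = - b) by lra.
    apply cos_inj; try lra. rewrite !cos_neg. exact hcos.
Qed.

Lemma IsArg_unique (z : C) (a b : R) : IsArg z a -> IsArg z b -> a = b.
Proof.
  intros [hz [ha ea]] [_ [hb eb]].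
  assert (hmod : Cmod z <> 0) by (intro h; apply hz, Cmod_eq_0, h).
  rewrite ea in eb at 1.
  injection eb. simpl. intros hsin hcos.
  apply cos_sin_inj; auto; apply Rmult_eq_reg_l with (Cmod z); auto; lra.
Qed.

Lemma W_Arg_bound (n d : nat) (lam : C) (psi : R) : (2 <= n)%nat ->
  W n d lam -> IsArg lam psi -> Rabs ((INR n - 1) * psi) <= PI.
Proof.
  intros hn [_ [psi' [harg' hpsi']]] harg.
  rewrite <- (IsArg_unique lam psi' psi harg' harg).
  assert (hN : 1 < INR n) by (apply (lt_INR 1); lia).
  rewrite Rabs_mult, Rabs_pos_eq by lra.
  apply Rabs_le in hpsi'.
  apply Rmult_le_compat_l with (r := INR n - 1) in hpsi'; [| lra].
  replace ((INR n - 1) * (PI / (INR n - 1))) with PI in hpsi' by (field; lra).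
  exact hpsi'.
Qed.

Lemma two_le_of_inv_add_lt_1 (n d : nat) : (0 < n)%nat -> (0 < d)%nat ->
  / INR n + / INR d < 1 -> (2 <= n)%nat.
Proof.
  intros hn hd hsum.
  destruct (Nat.le_gt_cases 2 n) as [h | h]; [exact h | exfalso].
  replace n with 1%nat in hsum by lia.
  assert (0 < / INR d) by (apply Rinv_0_lt_compat, lt_0_INR, hd).
  simpl in hsum. rewrite Rinv_1 in hsum. lra.
Qed.

Lemma Arg_window_incl (N D psi t : R) : 1 <= N -> 1 <= D ->
  Rabs psi <= PI -> Rabs ((N - 1) * psi) <= (D - 1) * PI ->
  (psi - PI) / (N + D) < t < (psi + PI) / (N + D) ->
  Rmax ((N * psi - D * PI) / (N + D)) ((N * psi + D * PI) / (N + D) - PI) < t <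
  Rmin ((N * psi + D * PI) / (N + D)) ((N * psi - D * PI) / (N + D) + PI).
Proof.
  intros hN hD hpsi hNpsi [tl tr].
  apply Rabs_le_between in hpsi, hNpsi.
  assert (hM : 0 < N + D) by lra.
  assert (mono : forall x y, x <= y -> x / (N + D) <= y / (N + D))
    by (intros x y h; apply Rmult_le_compat_r; [apply Rlt_le, Rinv_0_lt_compat |]; lra).
  replace ((N * psi + D * PI) / (N + D) - PI) with ((N * psi - N * PI) / (N + D))
    by (field; lra).
  replace ((N * psi - D * PI) / (N + D) + PI) with ((N * psi + N * PI) / (N + D))
    by (field; lra).
  split; [apply Rmax_lub_lt | apply Rmin_glb_lt].
  - apply Rle_lt_trans with ((psi - PI) / (N + D)); [apply mono; nra | exact tl].
  - apply Rle_lt_trans with ((psi - PI) / (N + D)); [apply mono; nra | exact tl].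
  - apply Rlt_le_trans with ((psi + PI) / (N + D)); [exact tr | apply mono; nra].
  - apply Rlt_le_trans with ((psi + PI) / (N + D)); [exact tr | apply mono; nra].
Qed.

Theorem proposition4p1 (n d : nat) (lam : C) (psi delta1 delta2 eps : R) :
  (0 < n)%nat -> (0 < d)%nat ->
  / INR n + / INR d < 1 ->
  n <> d ->
  W n d lam ->
  IsArg lam psi ->
  let m := (n + d)%nat in
  let B := B_fin n d lam in
  let T := T_fin n d lam in
  let Gamma := circle 2 in
  let mu := circle (/ 2 * Rpower (INR d * Cmod lam / INR n) (/ INR d)) in
  let gamma_n := preimage_circle n d lam 2 B in
  let gamma_d := preimage_circle n d lam 2 T in
  let gamma_n_hat := preimage_circle n d lam (2 + eps) B in
  let gamma_d_hat := preimage_circle n d lam (2 + eps) T in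
  0 < delta1 -> 0 < delta2 ->
  setdist_gt Gamma gamma_n delta1 ->
  setdist_gt mu gamma_d delta2 ->
  0 < eps ->
  setdist_lt gamma_n_hat gamma_n (/ 2 * Rmin delta1 delta2) ->
  setdist_lt gamma_d_hat gamma_d (/ 2 * Rmin delta1 delta2) ->
  let theta1 := Rmin ((INR n * psi + INR d * PI) / INR m)
                     ((INR n * psi - INR d * PI) / INR m + PI) in
  let theta2 := Rmax ((INR n * psi - INR d * PI) / INR m)
                     ((INR n * psi + INR d * PI) / INR m - PI) in
  forall z : C, Vprime m psi gamma_n_hat gamma_d_hat z ->
    Uhat eps theta1 theta2 z.
Proof.
  intros hn hd hsum _ hW harg m B T Gamma mu gn gd gn_hat gd_hat _ _ _ _ heps _ _
    theta1 theta2 z [[t [ht hwin]] [_ [_ [not_outside _]]]].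
  assert (hn2 : (2 <= n)%nat) by exact (two_le_of_inv_add_lt_1 n d hn hd hsum).
  assert (hd2 : (2 <= d)%nat)
    by (apply (two_le_of_inv_add_lt_1 d n hd hn); lra).
  assert (hD : 2 <= INR d) by (apply (le_INR 2); exact hd2).
  assert (hpsi : Rabs psi <= PI)
    by (destruct harg as [_ [hpsi _]]; apply Rabs_le; lra).
  pose proof (W_Arg_bound n d lam psi hn2 hW harg) as hNpsi.
  pose proof (W_Cmod_le n d lam hn hd hW) as hlam.
  pose proof PI_RGT_0.
  split.
  - apply Rnot_le_lt. intro hz. apply not_outside.
    apply outside_preimage_circle; [exact hn2 | exact hlam | lra | exact hz].
  - exists t. split; [exact ht |].
    unfold theta1, theta2, m in *. rewrite plus_INR in *.
    apply Arg_window_incl; [apply (le_INR 1); lia | lra | exact hpsi | nra | exact hwin].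
Qed.
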